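(* Let $q$ be a prime power, $m>4$, $F=\mathbb F_q$, $V=\mathbb F_q^m$. Let $E\subset E_1$ be subspaces of $\bigwedge^2V$ with $\dim E_1=\dim E+1$, and assume $E$ is decomposable and $E_1$ is not decomposable. Then: (i) the set $E_1\setminus E$ contains at most $q^2(q-1)$ decomposable vectors; (ii) if $E_1\setminus E$ contains a decomposable vector $\omega$ such that $V_\omega\subseteq V^E$, then $E_1\setminus E$ contains exactly $q^2(q-1)$ decomposable vectors.
   Context: A nonzero $\omega\in\bigwedge^2V$ is decomposable if $\omega=u\wedge v$ for some $u,v\in V$; a subspace is decomposable if all its nonzero elements are decomposable. For $\omega\in\bigwedge^2V$, $V_\omega=\{v\in V: v\wedge\omega=0\}$; for a subspace $E$, $V^E=\sum_{0\ne\omega\in E}V_\omega$. *)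

From HB Require Import structures.
From mathcomp Require Import all_boot all_order all_algebra.
Set Implicit Arguments. Unset Strict Implicit. Unset Printing Implicit Defensive.
Import GRing.Theory.
Local Open Scope ring_scope.

(* Model: V = F^m as row vectors 'rV[F]_m; /\^2 V as the space of alternating
   m x m matrices, the coordinate of e_i /\ e_j (i<j) being A i j. *)

Section Ext.
Variables (F : finFieldType) (m : nat).

Definition wedge (u v : 'rV[F]_m) : 'M[F]_m := u^T *m v - v^T *m u.

Definition alternating (A : 'M[F]_m) : bool :=
  [forall i, A i i == 0] && [forall i, forall j, A j i == - A i j].

Definition decomposable (w : 'M[F]_m) : bool :=
  (w != 0) && [exists u, exists v, w == wedge u v].

Definition decomposable_space (E : {vspace 'M[F]_m}) : Prop :=
  forall w, w \in E -> w != 0 -> decomposable w.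

(* v /\ w = 0 in /\^3 V: coefficient of e_i/\e_j/\e_k (i<j<k) vanishes *)
Definition wedge3_zero (w : 'M[F]_m) (v : 'rV[F]_m) : bool :=
  [forall i : 'I_m, forall j : 'I_m, forall k : 'I_m,
     ((i < j)%N && (j < k)%N) ==>
     (v 0 i * w j k - v 0 j * w i k + v 0 k * w i j == 0)].

Definition Vw (w : 'M[F]_m) : {vspace 'rV[F]_m} :=
  <<[seq v <- enum 'rV[F]_m | wedge3_zero w v]>>%VS.

Definition VE (E : {vspace 'M[F]_m}) : {vspace 'rV[F]_m} :=
  (\sum_(w : 'M[F]_m | (w \in E) && (w != 0%R)) Vw w)%VS.

Definition dec_diff (E E1 : {vspace 'M[F]_m}) : {set 'M[F]_m} :=
  [set w : 'M[F]_m | (w \in E1) && (w \notin E) && decomposable w].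

End Ext.

(* Fix a decomposable w0 in E1 \ E, so that E1 = E + F w0 and the decomposable vectors of
   E1 \ E are the l (w0 + s) with l != 0 and s in S = {s in E | w0 + s is decomposable or 0}.
   A nonzero w is decomposable iff its Plucker quadric Q(w) vanishes; as Q vanishes on E,
   Q(w0 + s) is linear in s in E, so S is a subspace and there are (q - 1) q^(dim S) such
   vectors. Two decomposable vectors have a decomposable or zero sum iff their planes meet.
   (i) Take xi in E with w0 + xi not decomposable: the planes of w0 and xi are disjoint, and
   the plane of every nonzero s in S meets both of them and the plane of every other such s.
   Inside the 4-space spanned by the two disjoint planes this forces all these planes through
   one point v0 and to meet a fixed plane B, so S lies in v0 /\ B and dim S <= 2.
   (ii) Write w0 = a /\ b with a, b in V^E. The vectors v with v /\ y in E \ 0 for some y form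
   a subspace containing V^E; this gives a /\ y and b /\ z in S, which are independent. *)

From mathcomp Require Import all_boot all_order all_algebra finfield.
From mathcomp Require Import ring zify.
From Stdlib Require Import Classical.
Set Implicit Arguments. Unset Strict Implicit. Unset Printing Implicit Defensive.
Import GRing.Theory.
Local Open Scope ring_scope.

Lemma eq_or_eq_const (T U W : Type) (D : T -> Prop) (f : T -> U) (g : T -> W) :
  (forall x y, D x -> D y -> f x = f y \/ g x = g y) ->
  (forall x y, D x -> D y -> f x = f y) \/ (forall x y, D x -> D y -> g x = g y).
Proof.
move=> fg; case: (classic (exists x1 x2, [/\ D x1, D x2 & f x1 <> f x2])); last first.
  by move=> f_const; left=> x y Dx Dy; apply: NNPP => fxy; apply: f_const; exists x, y.
move=> [x1 [x2 [Dx1 Dx2 f12]]]; right.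
have g_x1 y : D y -> g y = g x1.
  move=> Dy; have [fy1 | //] := fg y x1 Dy Dx1.
  have [fy2 | gy2] := fg y x2 Dy Dx2; first by case: f12; rewrite -fy1 -fy2.
  by have [//| g12] := fg x1 x2 Dx1 Dx2; rewrite gy2 g12.
by move=> x y Dx Dy; rewrite g_x1 // g_x1.
Qed.

Section SmallSubspaces.
Variables (K : fieldType) (vT : vectType K).
Implicit Types (a b p r v : vT) (U P X A B : {vspace vT}).

Lemma span2P v a b :
  reflect (exists c d, v = c *: a + d *: b) (v \in <<[:: a; b]>>%VS).
Proof.
rewrite span_cons span_seq1; apply: (iffP memv_addP).
  by move=> [x /vlineP[c ->] [y /vlineP[d ->] ->]]; exists c, d.
move=> [c [d ->]]; exists (c *: a); first by rewrite memvZ ?memv_line.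
by exists (d *: b); rewrite ?memvZ ?memv_line.
Qed.

Lemma memv_span2l a b : a \in <<[:: a; b]>>%VS.
Proof. by apply: memv_span; rewrite inE eqxx. Qed.

Lemma memv_span2r a b : b \in <<[:: a; b]>>%VS.
Proof. by apply: memv_span; rewrite !inE eqxx orbT. Qed.

Lemma span_ind (Q : pred vT) (S : seq vT) :
  Q 0 -> (forall u v, Q u -> Q v -> Q (u + v)) -> (forall c u, Q u -> Q (c *: u)) ->
  {in S, forall x, Q x} -> {in <<S>>%VS, forall v, Q v}.
Proof.
move=> Q0 QD QZ QS v; rewrite -{1}[S]/(tval (in_tuple S)) => /coord_span ->.
by apply: (big_ind Q) => // i _; apply/QZ/QS/mem_nth.
Qed.

Lemma subv_dim1_eq U1 U : \dim U = 1%N -> (U1 <= U)%VS -> U1 != 0%VS -> U1 = U.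
Proof.
move=> dU U1U U1nz; apply/eqP; rewrite -(dimv_leqif_eq U1U) dU eqn_leq -dU dimvS //=.
by rewrite dU lt0n dimv_eq0.
Qed.

Lemma plane_distinct_lines P p p' : \dim P = 2%N -> p \in P -> p' \in P ->
  p != 0 -> p' != 0 -> <[p]>%VS != <[p']>%VS -> (P <= <[p]> + <[p']>)%VS.
Proof.
move=> dP pP p'P pnz p'nz neq.
have cap0 : (<[p]> :&: <[p']> = 0)%VS.
  apply/eqP; apply: contraR neq => cnz.
  have d1 (q : vT) : q != 0 -> \dim <[q]> = 1%N by move=> qnz; rewrite dim_vline qnz.
  rewrite -(subv_dim1_eq (d1 _ pnz) (capvSl _ _) cnz).
  by rewrite (subv_dim1_eq (d1 _ p'nz) (capvSr _ _) cnz).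
have sP : (<[p]> + <[p']> <= P)%VS by rewrite subv_add -!memvE pP p'P.
have := dimv_sum_cap <[p]> <[p']>; rewrite cap0 dimv0 addn0 !dim_vline pnz p'nz => ds.
by rewrite -(geq_leqif (dimv_leqif_sup sP)) ds dP.
Qed.

(* Otherwise the four-dimensional space P + X would lie in A + B, of dimension at most 3. *)
Lemma meeting_planes_share_line P X A B p p' r r' :
  (P :&: X = 0)%VS -> \dim P = 2%N -> \dim X = 2%N -> \dim A = 2%N -> \dim B = 2%N ->
  (A :&: B != 0)%VS ->
  p \in (P :&: A)%VS -> p' \in (P :&: B)%VS -> r \in (X :&: A)%VS -> r' \in (X :&: B)%VS ->
  p != 0 -> p' != 0 -> r != 0 -> r' != 0 ->
  <[p]>%VS = <[p']>%VS \/ <[r]>%VS = <[r']>%VS.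
Proof.
move=> PX0 dP dX dA dB AB; rewrite !memv_cap.
move=> /andP[pP pA] /andP[p'P p'B] /andP[rX rA] /andP[r'X r'B] pnz p'nz rnz r'nz.
have [-> | npp] := eqVneq <[p]>%VS <[p']>%VS; first by left.
have [-> | nrr] := eqVneq <[r]>%VS <[r']>%VS; first by right.
have PX_AB : (P + X <= A + B)%VS.
  have lineS q q' : q \in A -> q' \in B -> (<[q]> + <[q']> <= A + B)%VS.
    by move=> qA q'B; apply: addvS; rewrite -memvE.
  rewrite subv_add (subv_trans (plane_distinct_lines dP pP p'P pnz p'nz npp)) ?lineS //.
  by rewrite (subv_trans (plane_distinct_lines dX rX r'X rnz r'nz nrr)) ?lineS.
have := dimv_sum_cap P X; rewrite PX0 dimv0 addn0 dP dX => dPX.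
have := dimv_sum_cap A B; rewrite dA dB => dAB.
move: AB (dimvS PX_AB); rewrite -dimv_eq0 dPX.
move: (\dim (A :&: B)) (\dim (A + B)) dAB => x y dxy; clear -dxy; lia.
Qed.

End SmallSubspaces.

Lemma nonzero_entry (R : nmodType) p n (w : 'M[R]_(p, n)) :
  w != 0 -> exists i j, w i j != 0.
Proof.
move=> wnz; have [[i j] /= wij | w0] := pickP (fun ij => w ij.1 ij.2 != 0).
  by exists i, j.
by case/eqP: wnz; apply/matrixP => i j; rewrite mxE; move/negbFE/eqP: (w0 (i, j)).
Qed.

Section Plucker.
Variables (F : finFieldType) (m : nat).
Implicit Types (a b u v f g : 'rV[F]_m) (w : 'M[F]_m).

Definition dot f u : F := (f *m u^T) 0 0.

Definition bil w f g : F := (f *m w *m g^T) 0 0.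

(* A matrix w is read as the bilinear form [bil w] on row vectors; [isotropic w] says that
   w /\ w = 0, i.e. that w satisfies all the Plucker relations. *)
Definition plucker_form w f1 f2 f3 f4 : F :=
  bil w f1 f2 * bil w f3 f4 - bil w f1 f3 * bil w f2 f4 + bil w f1 f4 * bil w f2 f3.

Fact isotropic_key : unit. Proof. exact: tt. Qed.
Definition isotropic := locked_with isotropic_key (fun w =>
  [forall f1, forall f2, forall f3, forall f4, plucker_form w f1 f2 f3 f4 == 0]).
Canonical isotropic_unlockable := [unlockable fun isotropic].

Lemma isotropicP w :
  reflect (forall f1 f2 f3 f4, plucker_form w f1 f2 f3 f4 = 0) (isotropic w).
Proof.
rewrite unlock; apply: (iffP forallP) => [Q0 f1 f2 f3 f4 | Q0 f1].
  by move/forallP: (Q0 f1) => /(_ f2) /forallP /(_ f3) /forallP /(_ f4) /eqP.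
by do 3 apply/forallP => ?; apply/eqP/Q0.
Qed.

Lemma bilD w w' f g : bil (w + w') f g = bil w f g + bil w' f g.
Proof. by rewrite /bil mulmxDr mulmxDl mxE. Qed.

Lemma bilZ k w f g : bil (k *: w) f g = k * bil w f g.
Proof. by rewrite /bil -scalemxAr -scalemxAl mxE. Qed.

Lemma bil_delta w i j : bil w (delta_mx 0 i) (delta_mx 0 j) = w i j.
Proof. by rewrite /bil -rowE trmx_delta -colE !mxE. Qed.

Lemma dotC f u : dot f u = dot u f.
Proof. by rewrite /dot !mxE; apply: eq_bigr => k _; rewrite !mxE mulrC. Qed.

Lemma wedgeE u v i j : wedge u v i j = u 0 i * v 0 j - v 0 i * u 0 j.
Proof. by rewrite /wedge !mxE !big_ord1 !mxE. Qed.

Lemma bil_wedge u v f g : bil (wedge u v) f g = dot f u * dot g v - dot f v * dot g u.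
Proof.
have mul11 (A B : 'M[F]_1) : (A *m B) 0 0 = A 0 0 * B 0 0 by rewrite mxE big_ord1.
rewrite /bil /wedge mulmxBr mulmxBl !mulmxA -[f *m u^T *m v *m g^T]mulmxA.
rewrite -[f *m v^T *m u *m g^T]mulmxA [LHS]mxE [X in _ + X]mxE !mul11.
by rewrite -/(dot f u) -/(dot v g) -/(dot f v) -/(dot u g) (dotC v) (dotC u).
Qed.

Lemma plucker_formZ k w f1 f2 f3 f4 :
  plucker_form (k *: w) f1 f2 f3 f4 = k ^+ 2 * plucker_form w f1 f2 f3 f4.
Proof. by rewrite /plucker_form !bilZ; ring. Qed.

Lemma plucker_formD3 w1 w2 w3 f1 f2 f3 f4 :
  plucker_form (w1 + w2 + w3) f1 f2 f3 f4 =
  plucker_form (w1 + w2) f1 f2 f3 f4 + plucker_form (w1 + w3) f1 f2 f3 f4 +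
  plucker_form (w2 + w3) f1 f2 f3 f4 - plucker_form w1 f1 f2 f3 f4 -
  plucker_form w2 f1 f2 f3 f4 - plucker_form w3 f1 f2 f3 f4.
Proof. by rewrite /plucker_form !bilD; ring. Qed.

Lemma plucker_formDZ w1 w2 k f1 f2 f3 f4 :
  plucker_form (w1 + k *: w2) f1 f2 f3 f4 =
  (1 - k) * plucker_form w1 f1 f2 f3 f4 + (k ^+ 2 - k) * plucker_form w2 f1 f2 f3 f4 +
  k * plucker_form (w1 + w2) f1 f2 f3 f4.
Proof. by rewrite /plucker_form !bilD !bilZ; ring. Qed.

Lemma isotropic0 : isotropic 0.
Proof. by apply/isotropicP => *; rewrite -(scale0r 0) plucker_formZ expr0n mul0r. Qed.

Lemma isotropicZ k w : isotropic w -> isotropic (k *: w).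
Proof. by move/isotropicP=> Q0; apply/isotropicP => *; rewrite plucker_formZ Q0 mulr0. Qed.

Lemma isotropicD3 w1 w2 w3 : isotropic w1 -> isotropic w2 -> isotropic w3 ->
  isotropic (w1 + w2) -> isotropic (w1 + w3) -> isotropic (w2 + w3) ->
  isotropic (w1 + w2 + w3).
Proof.
move=> /isotropicP Q1 /isotropicP Q2 /isotropicP Q3 /isotropicP Q12 /isotropicP Q13.
move=> /isotropicP Q23; apply/isotropicP => *.
by rewrite plucker_formD3 Q1 Q2 Q3 Q12 Q13 Q23 !subr0 !addr0.
Qed.

Lemma isotropicDZ w1 w2 k : isotropic w1 -> isotropic w2 -> isotropic (w1 + w2) ->
  isotropic (w1 + k *: w2).
Proof.
move=> /isotropicP Q1 /isotropicP Q2 /isotropicP Q12; apply/isotropicP => *.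
by rewrite plucker_formDZ Q1 Q2 Q12 !mulr0 !addr0.
Qed.

Lemma isotropic_wedge u v : isotropic (wedge u v).
Proof. by apply/isotropicP => f1 f2 f3 f4; rewrite /plucker_form !bil_wedge; ring. Qed.

Lemma isotropic_plucker w : isotropic w -> forall i j k l,
  w i j * w k l - w i k * w j l + w i l * w j k = 0.
Proof.
move=> /isotropicP Q0 i j k l.
by have := Q0 (delta_mx 0 i) (delta_mx 0 j) (delta_mx 0 k) (delta_mx 0 l);
  rewrite /plucker_form !bil_delta.
Qed.

(* If w i j != 0, the Plucker relations give w = (w i j)^-1 (row i w) /\ (row j w). *)
Lemma isotropic_decomposable w : isotropic w -> w != 0 -> decomposable w.
Proof.
move=> Qw wnz; rewrite /decomposable wnz; have [i [j wij]] := nonzero_entry wnz.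
apply/existsP; exists ((w i j)^-1 *: row i w); apply/existsP; exists (row j w).
apply/eqP/matrixP => k l; rewrite wedgeE !mxE.
have wkl : w i j * w k l = w i k * w j l - w i l * w j k.
  by rewrite -[LHS]subr0 -(isotropic_plucker Qw i j k l); ring.
by rewrite -[w k l](mulKf wij) wkl; ring.
Qed.

Lemma decomposable_wedge w : decomposable w -> exists a b, w = wedge a b /\ wedge a b != 0.
Proof. by case/andP=> wnz /existsP[a /existsP[b /eqP wab]]; exists a, b; rewrite -wab. Qed.

Lemma decomposable_isotropic w : decomposable w -> isotropic w.
Proof. by case/decomposable_wedge=> a [b [-> _]]; apply: isotropic_wedge. Qed.

End Plucker.

Section Planes.
Variables (F : finFieldType) (m : nat).
Implicit Types (a b c d u v x y f : 'rV[F]_m) (w s : 'M[F]_m).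

Lemma wedgeDl u u' v : wedge (u + u') v = wedge u v + wedge u' v.
Proof. by apply/matrixP => i j; rewrite !wedgeE [in RHS]mxE ?wedgeE ?mxE; ring. Qed.

Lemma wedgeDr u v v' : wedge u (v + v') = wedge u v + wedge u v'.
Proof. by apply/matrixP => i j; rewrite !wedgeE [in RHS]mxE ?wedgeE ?mxE; ring. Qed.

Lemma wedgeZl k u v : wedge (k *: u) v = k *: wedge u v.
Proof. by apply/matrixP => i j; rewrite !wedgeE [in RHS]mxE ?wedgeE ?mxE; ring. Qed.

Lemma wedgeZr k u v : wedge u (k *: v) = k *: wedge u v.
Proof. by apply/matrixP => i j; rewrite !wedgeE [in RHS]mxE ?wedgeE ?mxE; ring. Qed.

Lemma wedgeC u v : wedge v u = - wedge u v.
Proof. by apply/matrixP => i j; rewrite !wedgeE [in RHS]mxE ?wedgeE ?mxE; ring. Qed.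

Lemma wedgexx u : wedge u u = 0.
Proof. by apply/matrixP => i j; rewrite wedgeE mxE; ring. Qed.

Lemma wedge0r u : wedge u 0 = 0.
Proof. by rewrite -(scale0r 0) wedgeZr scale0r. Qed.

Lemma wedge0l u : wedge 0 u = 0.
Proof. by rewrite wedgeC wedge0r oppr0. Qed.

Lemma wedge_eq0 a b : (wedge a b == 0) = (b == 0) || (a \in <[b]>%VS).
Proof.
apply/eqP/idP => [ab0 | /orP[/eqP -> | /vlineP[k ->]]]; last 2 first.
- by rewrite wedge0r.
- by rewrite wedgeZl wedgexx scaler0.
have [-> // | bnz] := eqVneq b 0; have [i bi] : exists i, b 0 i != 0.
  by have [i [j bij]] := nonzero_entry bnz; exists j; rewrite [i]ord1 in bij.
apply/vlineP; exists (a 0 i / b 0 i); apply/rowP => j; rewrite !mxE.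
have /matrixP/(_ j i) := ab0; rewrite wedgeE mxE => abji.
by apply: (mulIf bi); rewrite mulrAC divfK // -[LHS]subr0 -abji; ring.
Qed.

(* The coefficient of e_i /\ e_j /\ e_k in v /\ w, for every triple of indices; [wedge3_zero]
   only constrains i < j < k. *)
Definition wedge3 w v (i j k : 'I_m) := v 0 i * w j k - v 0 j * w i k + v 0 k * w i j.

Lemma wedge3_zero_all a b v :
  wedge3_zero (wedge a b) v -> forall i j k, wedge3 (wedge a b) v i j k = 0.
Proof.
move=> /forallP w3.
have swap12 (i j k : 'I_m) : wedge3 (wedge a b) v j i k = - wedge3 (wedge a b) v i j k.
  by rewrite /wedge3 !wedgeE; ring.
have swap23 (i j k : 'I_m) : wedge3 (wedge a b) v i k j = - wedge3 (wedge a b) v i j k.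
  by rewrite /wedge3 !wedgeE; ring.
have diag12 (i k : 'I_m) : wedge3 (wedge a b) v i i k = 0 by rewrite /wedge3 !wedgeE; ring.
have diag23 (i j : 'I_m) : wedge3 (wedge a b) v i j j = 0 by rewrite /wedge3 !wedgeE; ring.
have sorted (i j k : 'I_m) : (i < j < k)%N -> wedge3 (wedge a b) v i j k = 0.
  by move=> ijk; move/forallP: (w3 i) => /(_ j) /forallP /(_ k) /implyP /(_ ijk) /eqP.
have lt12 (i j k : 'I_m) : (i < j)%N -> wedge3 (wedge a b) v i j k = 0.
  move=> ij; case: (ltngtP j k) => [jk | kj | /val_inj ->]; last exact: diag23.
    by rewrite sorted ?ij.
  case: (ltngtP i k) => [ik | ki | /val_inj ->].
  - by rewrite swap23 sorted ?oppr0 ?ik.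
  - by rewrite swap23 swap12 opprK sorted ?ki.
  - by rewrite swap23 diag12 oppr0.
move=> i j k; case: (ltngtP i j) => [ij | ji | /val_inj ->]; first exact: lt12.
  by rewrite -[LHS]opprK -swap12 lt12 ?oppr0.
exact: diag12.
Qed.

Lemma wedge3_zero_span2 a b v : wedge a b != 0 ->
  wedge3_zero (wedge a b) v = (v \in <<[:: a; b]>>%VS).
Proof.
move=> abnz; apply/idP/idP => [/wedge3_zero_all w3 | /span2P[c [d ->]]]; last first.
  by do 3 apply/forallP => ?; apply/implyP => _; rewrite !wedgeE !mxE; apply/eqP; ring.
have [i [j]] := nonzero_entry abnz; rewrite wedgeE => abij.
apply/span2P; exists ((v 0 i * b 0 j - v 0 j * b 0 i) / (a 0 i * b 0 j - b 0 i * a 0 j)).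
exists ((v 0 j * a 0 i - v 0 i * a 0 j) / (a 0 i * b 0 j - b 0 i * a 0 j)).
apply/rowP => k; rewrite !mxE; apply: (mulfI abij).
by rewrite -[LHS]subr0 -(w3 i j k) /wedge3 !wedgeE; field.
Qed.

Lemma Vw_wedge a b : wedge a b != 0 -> Vw (wedge a b) = <<[:: a; b]>>%VS.
Proof.
move=> abnz; apply/eqP; rewrite eqEsubv; apply/andP; split.
  by apply/span_subvP => v; rewrite mem_filter wedge3_zero_span2 // => /andP[].
apply/subvP => v vab; apply: memv_span.
by rewrite mem_filter mem_enum andbT wedge3_zero_span2.
Qed.

Lemma free_wedge a b : wedge a b != 0 -> free [:: a; b].
Proof.
rewrite free_cons seq1_free span_seq1 wedge_eq0 negb_or => /andP[bnz ab].
by rewrite ab bnz.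
Qed.

Lemma dim_span_wedge a b : wedge a b != 0 -> \dim <<[:: a; b]>> = 2%N.
Proof. by move/free_wedge/eqP. Qed.

Lemma dual_basis n (X : n.-tuple 'rV[F]_m) : free X ->
  exists f : 'I_n -> 'rV[F]_m, forall i j : 'I_n, dot (f i) X`_j = (j == i)%:R.
Proof.
move=> freeX; exists (fun i => \row_k coord X i (delta_mx 0 k)) => i j.
rewrite -(coord_free j i freeX) {2}[X`_j]row_sum_delta linear_sum /dot mxE.
by apply: eq_bigr => k _; rewrite linearZ /= !mxE mulrC.
Qed.

(* Evaluating the Plucker form of a /\ b + c /\ d on the dual basis of a, b, c, d gives 1. *)
Lemma isotropic_wedgeD_meet a b c d : wedge a b != 0 -> wedge c d != 0 ->
  isotropic (wedge a b + wedge c d) -> (<<[:: a; b]>> :&: <<[:: c; d]>> != 0)%VS.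
Proof.
move=> abnz cdnz /isotropicP Q0; apply/negP => /eqP cap0.
have freeX : free (in_tuple [:: a; b; c; d]).
  rewrite /free /= -[[:: a, b, c & _]]/([:: a; b] ++ [:: c; d]) span_cat.
  have := dimv_sum_cap <<[:: a; b]>> <<[:: c; d]>>.
  by rewrite cap0 dimv0 addn0 !dim_span_wedge // => ->.
have [f fE] := dual_basis freeX.
pose i0 : 'I_4 := ord0; pose i1 : 'I_4 := Ordinal (isT : 1 < 4)%N.
pose i2 : 'I_4 := Ordinal (isT : 2 < 4)%N; pose i3 : 'I_4 := Ordinal (isT : 3 < 4)%N.
have := Q0 (f i0) (f i1) (f i2) (f i3); rewrite /plucker_form !(bilD (wedge a b)) !bil_wedge.
rewrite ![dot _ a](fE _ i0) ![dot _ b](fE _ i1) ![dot _ c](fE _ i2) ![dot _ d](fE _ i3) /=.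
by move=> Q1; have /eqP := oner_neq0 F; apply; rewrite -[RHS]Q1; ring.
Qed.

Lemma wedge_through a b v : wedge a b != 0 -> v \in <<[:: a; b]>>%VS -> v != 0 ->
  exists y, wedge a b = wedge v y.
Proof.
move=> abnz /span2P[c [d ->]]; have [-> | cnz] := eqVneq c 0 => vnz.
  have dnz : d != 0 by apply: contra vnz => /eqP ->; rewrite !scale0r addr0.
  by exists (- d^-1 *: a); apply/matrixP => i j; rewrite !wedgeE !mxE; field.
by exists (c^-1 *: b); apply/matrixP => i j; rewrite !wedgeE !mxE; field.
Qed.

Lemma meet_isotropic_wedgeD a b c d p : wedge a b != 0 -> wedge c d != 0 ->
  p \in <<[:: a; b]>>%VS -> p \in <<[:: c; d]>>%VS -> p != 0 ->
  isotropic (wedge a b + wedge c d).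
Proof.
move=> abnz cdnz pab pcd pnz.
have [y ->] := wedge_through abnz pab pnz; have [z ->] := wedge_through cdnz pcd pnz.
by rewrite -wedgeDr isotropic_wedge.
Qed.

Lemma dim_Vw s : decomposable s -> \dim (Vw s) = 2%N.
Proof. by case/decomposable_wedge=> a [b [-> abnz]]; rewrite Vw_wedge // dim_span_wedge. Qed.

Lemma decomposable_planes_meet s t : decomposable s -> decomposable t ->
  isotropic (s + t) -> (Vw s :&: Vw t != 0)%VS.
Proof.
case/decomposable_wedge=> a [b [-> abnz]] /decomposable_wedge[c [d [-> cdnz]]].
by rewrite !Vw_wedge //; apply: isotropic_wedgeD_meet.
Qed.

Lemma planes_meet_isotropic s t : decomposable s -> decomposable t ->
  (Vw s :&: Vw t != 0)%VS -> isotropic (s + t).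
Proof.
case/decomposable_wedge=> a [b [-> abnz]] /decomposable_wedge[c [d [-> cdnz]]].
rewrite !Vw_wedge // => capnz.
have /memv_capP[pab pcd] := memv_pick (<<[:: a; b]>> :&: <<[:: c; d]>>)%VS.
by apply: meet_isotropic_wedgeD pab pcd _; rewrite // vpick0.
Qed.

(* A nonzero s with v0 in its plane is v0 /\ y'; a nonzero vector of Vw t in that plane is
   al v0 + be y' with be != 0, as v0 is not in Vw t; so s lies in v0 /\ Vw t. *)
Lemma wedge_pencil_dim (U : {vspace 'M[F]_m}) t v0 : decomposable t -> v0 \notin Vw t ->
  {in U, forall s, s != 0 -> [/\ decomposable s, v0 \in Vw s & (Vw t :&: Vw s != 0)%VS]} ->
  (\dim U <= 2)%N.
Proof.
case/decomposable_wedge=> b1 [b2 [-> b12nz]]; set B := Vw _.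
have defB : B = <<[:: b1; b2]>>%VS := Vw_wedge b12nz; move=> v0B Upencil.
suff /dimvS : (U <= <<[:: wedge v0 b1; wedge v0 b2]>>)%VS.
  by move/leq_trans; apply; apply: dim_span.
have v0nz : v0 != 0 by apply: contra v0B => /eqP ->; rewrite mem0v.
apply/subvP => s sU; have [-> | snz] := eqVneq s 0; first exact: mem0v.
have [/decomposable_wedge[x [y [sxy xynz]]] v0s Bs] := Upencil s sU snz.
rewrite sxy Vw_wedge // in v0s; have [y' xyE] := wedge_through xynz v0s v0nz.
rewrite xyE in xynz; rewrite sxy xyE Vw_wedge // in Bs *.
have /memv_capP[bB] := memv_pick (B :&: <<[:: v0; y']>>)%VS; rewrite -vpick0 in Bs.
move: (vpick _) Bs bB => bb bbnz bB /span2P[al [be bbE]].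
have benz : be != 0.
  apply: contra v0B => /eqP be0; move: bbnz bB; rewrite bbE be0 scale0r addr0.
  have [-> | alnz _] := eqVneq al 0; first by rewrite scale0r eqxx.
  by move/(memvZ al^-1); rewrite scalerA mulVf // scale1r.
move: bB; rewrite defB => /span2P[g1 [g2 bbB]].
apply/span2P; exists (be^-1 * g1), (be^-1 * g2).
rewrite -!scalerA -scalerDr -!wedgeZr -wedgeDr -bbB bbE wedgeDr !wedgeZr wedgexx.
by rewrite scaler0 add0r scalerA mulVf // scale1r.
Qed.

(* The lines cut on the two disjoint planes are, by [meeting_planes_share_line], constant on
   one of the two planes; the common point of that pencil then yields [wedge_pencil_dim]. *)
Lemma planes_meeting_disjoint_planes_dim (U : {vspace 'M[F]_m}) t1 t2 :
  decomposable t1 -> decomposable t2 -> (Vw t1 :&: Vw t2 = 0)%VS ->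
  {in U, forall s, s != 0 ->
    [/\ decomposable s, Vw t1 :&: Vw s != 0 & Vw t2 :&: Vw s != 0]%VS} ->
  {in U &, forall s s', s != 0 -> s' != 0 -> (Vw s :&: Vw s' != 0)%VS} ->
  (\dim U <= 2)%N.
Proof.
move=> dt1 dt2 t12 Umeet Upair; have [-> | Unz] := eqVneq U 0%VS; first by rewrite dimv0.
pose D s := s \in U /\ s != 0.
have D0 : D (vpick U) by split; rewrite ?memv_pick ?vpick0.
pose p t s := vpick (Vw t :&: Vw s).
have pP t s : (Vw t :&: Vw s != 0)%VS -> p t s \in (Vw t :&: Vw s)%VS /\ p t s != 0.
  by move=> nz; rewrite memv_pick vpick0.
have shared s s' : D s -> D s' ->
    <[p t1 s]>%VS = <[p t1 s']>%VS \/ <[p t2 s]>%VS = <[p t2 s']>%VS.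
  move=> [sU snz] [s'U s'nz]; have [ds m1s m2s] := Umeet s sU snz.
  have [ds' m1s' m2s'] := Umeet s' s'U s'nz.
  have [[p1s ?] [p1s' ?]] := (pP _ _ m1s, pP _ _ m1s').
  have [[p2s ?] [p2s' ?]] := (pP _ _ m2s, pP _ _ m2s').
  by apply: (meeting_planes_share_line t12) p1s p1s' p2s p2s' _ _ _ _; rewrite ?dim_Vw ?Upair.
have pencil ta tb : decomposable tb -> (Vw ta :&: Vw tb = 0)%VS ->
    (forall s, D s -> Vw ta :&: Vw s != 0 /\ Vw tb :&: Vw s != 0)%VS ->
    (forall s s', D s -> D s' -> <[p ta s]>%VS = <[p ta s']>%VS) -> (\dim U <= 2)%N.
  move=> dtb tab Dmeet pconst; have [/memv_capP[p0a p0s0] p0nz] := pP _ _ (Dmeet _ D0).1.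
  apply: (wedge_pencil_dim dtb (v0 := p ta (vpick U))).
    by apply: contra p0nz => p0b; rewrite -memv0 -tab memv_cap p0a.
  move=> s sU snz; have Ds : D s by [].
  have [/memv_capP[_ pss] _] := pP _ _ (Dmeet _ Ds).1.
  split; [by have [] := Umeet s sU snz | | exact: (Dmeet _ Ds).2].
  by rewrite memvE -(pconst _ _ Ds D0) -memvE.
have Dmeet s : D s -> (Vw t1 :&: Vw s != 0 /\ Vw t2 :&: Vw s != 0)%VS.
  by move=> [sU snz]; have [] := Umeet s sU snz.
case: (eq_or_eq_const shared) => pconst; first exact: pencil dt2 t12 Dmeet pconst.
apply: pencil dt1 _ _ pconst; first by rewrite capvC.
by move=> s /Dmeet[].
Qed.

End Planes.

Section DecomposableSpace.
Variables (F : finFieldType) (m : nat) (E : {vspace 'M[F]_m}).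
Hypothesis decE : decomposable_space E.
Implicit Types (u v x y : 'rV[F]_m) (w : 'M[F]_m).

Lemma isotropic_mem w : w \in E -> isotropic w.
Proof.
by move=> wE; have [-> | /(decE wE)/decomposable_isotropic //] := eqVneq w 0; apply: isotropic0.
Qed.

Lemma planes_meet_in s t : s \in E -> t \in E -> s != 0 -> t != 0 -> (Vw s :&: Vw t != 0)%VS.
Proof.
move=> sE tE snz tnz; apply: decomposable_planes_meet (decE sE snz) (decE tE tnz) _.
by apply: isotropic_mem; rewrite memvD.
Qed.

Definition partnered u := (u == 0) || [exists y, (wedge u y \in E) && (wedge u y != 0)].

Lemma partneredP u : u != 0 ->
  reflect (exists y, wedge u y \in E /\ wedge u y != 0) (partnered u).
Proof.
move=> unz; rewrite /partnered (negbTE unz).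
by apply: (iffP existsP) => [[y /andP[]] | [y []]]; exists y => //; apply/andP.
Qed.

Lemma partnered_add u v y1 y2 :
  wedge u y1 \in E -> wedge u y1 != 0 -> wedge v y2 \in E -> wedge v y2 != 0 ->
  partnered (u + v).
Proof.
move=> uE unz vE vnz; have [-> | uvnz] := eqVneq (u + v) 0; first by rewrite /partnered eqxx.
apply/partneredP => //; set U := (<<[:: u; y1]>> :&: <<[:: v; y2]>>)%VS.
have Unz : U != 0%VS.
  by apply: isotropic_wedgeD_meet unz vnz _; apply: isotropic_mem; rewrite memvD.
have /memv_capP[pu pv] := memv_pick U; have pnz : vpick U != 0 by rewrite vpick0.
move: (vpick U) pu pv pnz => p pu pv pnz.
have [x1 ux1] := wedge_through unz pu pnz; have [x2 vx2] := wedge_through vnz pv pnz.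
have px1nz : wedge p x1 != 0 by rewrite -ux1.
have px2nz : wedge p x2 != 0 by rewrite -vx2.
have /span2P[a1 [b1 uE']] : u \in <<[:: p; x1]>>%VS.
  by rewrite -(Vw_wedge px1nz) -ux1 Vw_wedge // memv_span2l.
have /span2P[a2 [b2 vE']] : v \in <<[:: p; x2]>>%VS.
  by rewrite -(Vw_wedge px2nz) -vx2 Vw_wedge // memv_span2l.
have uvpE : wedge (u + v) p \in E.
  rewrite uE' vE' !wedgeDl !wedgeZl !wedgexx !scaler0 !add0r (wedgeC p x1) (wedgeC p x2).
  by rewrite -ux1 -vx2 rpredD // rpredZ // rpredN.
have [uvp0 | ] := eqVneq (wedge (u + v) p) 0; last by exists p.
move/eqP: uvp0; rewrite wedge_eq0 (negbTE pnz) => /vlineP[t uvt].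
have tnz : t != 0 by apply: contra uvnz => /eqP t0; rewrite uvt t0 scale0r.
by exists (t^-1 *: x1); rewrite uvt wedgeZl wedgeZr scalerA mulfV // scale1r -ux1.
Qed.

Lemma partnered_span : {in <<[seq u <- enum 'rV[F]_m | partnered u]>>%VS, forall u, partnered u}.
Proof.
apply: span_ind; first by rewrite /partnered eqxx.
- move=> u v; have [-> | unz] := eqVneq u 0; first by rewrite add0r.
  have [-> | vnz] := eqVneq v 0; first by rewrite addr0.
  move=> /(partneredP unz)[y1 [uy1E uy1nz]] /(partneredP vnz)[y2 [vy2E vy2nz]].
  exact: partnered_add uy1E uy1nz vy2E vy2nz.
- move=> k u; have [-> | knz] := eqVneq k 0; first by rewrite scale0r /partnered eqxx.
  have [-> | unz] := eqVneq u 0; first by rewrite scaler0 /partnered eqxx.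
  move=> /(partneredP unz)[y [yE ynz]]; apply/partneredP; first by rewrite scaler_eq0 negb_or knz.
  by exists (k^-1 *: y); rewrite wedgeZl wedgeZr scalerA mulfV // scale1r.
- by move=> u; rewrite mem_filter => /andP[].
Qed.

Lemma VE_partner v : v \in VE E -> v != 0 -> exists y, wedge v y \in E /\ wedge v y != 0.
Proof.
move=> vVE vnz; apply/partneredP => //; apply: partnered_span; move: v vVE {vnz}.
apply/subvP/subv_sumP => w /andP[wE wnz]; apply/subvP => u uw; apply: memv_span.
rewrite mem_filter mem_enum andbT; have [-> | unz] := eqVneq u 0; first by rewrite /partnered eqxx.
have [a [b [wab abnz]]] := decomposable_wedge (decE wE wnz).
move: uw; rewrite wab Vw_wedge // => uab; have [y aby] := wedge_through abnz uab unz.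
by apply/partneredP => //; exists y; rewrite -aby -wab.
Qed.

End DecomposableSpace.

Section ShiftByDecomposable.
Variables (F : finFieldType) (m : nat) (E E1 : {vspace 'M[F]_m}) (w0 : 'M[F]_m).
Hypotheses (subE : (E <= E1)%VS) (dimE1 : \dim E1 = (\dim E).+1).
Hypotheses (decE : decomposable_space E).
Hypotheses (dec_w0 : decomposable w0) (w0E1 : w0 \in E1) (w0E : w0 \notin E).

Lemma E1_split w : w \in E1 -> exists l e, e \in E /\ w = e + l *: w0.
Proof.
move=> wE1; have sE : (E + <[w0]> <= E1)%VS by rewrite subv_add subE -memvE.
have ltE : (\dim E < \dim (E + <[w0]>))%N.
  rewrite (ltn_leqif (dimv_leqif_sup (addvSl E <[w0]>))).
  by apply: contra w0E => /subvP; apply; apply: (subvP (addvSr E _)); apply: memv_line.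
have : (E1 <= E + <[w0]>)%VS by rewrite -(geq_leqif (dimv_leqif_sup sE)) dimE1.
by move/subvP/(_ w wE1)/memv_addP=> [e eE [_ /vlineP[l ->] ->]]; exists l, e.
Qed.

Definition shift_set := [set s | (s \in E) && isotropic (w0 + s)].
Definition shift_space := <<enum shift_set>>%VS.

Lemma mem_shift_space s : (s \in shift_space) = (s \in shift_set).
Proof.
have Qw0 := decomposable_isotropic dec_w0.
apply/idP/idP => [|sS]; last by apply: memv_span; rewrite mem_enum.
apply: (span_ind (Q := fun s => s \in shift_set)) => /= [|u v|k u|u]; last by rewrite mem_enum.
- by rewrite inE mem0v addr0.
- rewrite !inE => /andP[uE Qu] /andP[vE Qv].
  rewrite memvD //= addrA.
  by apply: isotropicD3 => //; apply: (isotropic_mem decE); rewrite ?memvD.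
- rewrite !inE => /andP[uE Qu]; rewrite memvZ //=.
  by apply: isotropicDZ => //; apply: (isotropic_mem decE).
Qed.

Lemma E1_split_inj l l' e e' : e \in E -> e' \in E ->
  e + l *: w0 = e' + l' *: w0 -> l = l' /\ e = e'.
Proof.
move=> eE e'E ee'; suff ll' : l = l' by split=> //; move: ee'; rewrite ll' => /addIr.
apply/eqP; apply: contraR w0E; rewrite -subr_eq0 => ll'nz.
have -> : w0 = (l - l')^-1 *: (e' - e).
  apply: (scalerI ll'nz); rewrite scalerA mulfV // scale1r scalerBl.
  by apply/eqP; rewrite subr_eq addrAC -ee' [e + _]addrC addrK.
by rewrite memvZ // memvB.
Qed.

Lemma card_dec_diff : #|dec_diff E E1| = ((#|F|).-1 * #|F| ^ \dim shift_space)%N.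
Proof.
pose f (p : F * 'M[F]_m) := p.1 *: (w0 + p.2).
have fE l s : f (l, s) = l *: s + l *: w0 by rewrite /f scalerDr addrC.
have -> : dec_diff E E1 = f @: setX [set~ 0] shift_set.
  apply/setP => w; rewrite inE; apply/idP/imsetP => [/andP[/andP[wE1 wE] dw] | ].
    have [l [e [eE defw]]] := E1_split wE1.
    have lnz : l != 0 by apply: contra wE => /eqP l0; rewrite defw l0 scale0r addr0.
    exists (l, l^-1 *: e); last by rewrite fE scalerA mulfV // scale1r.
    rewrite !inE lnz memvZ //=.
    have -> : w0 + l^-1 *: e = l^-1 *: w by rewrite defw scalerDr scalerA mulVf // scale1r addrC.
    by rewrite isotropicZ ?decomposable_isotropic.
  move=> [[l s]]; rewrite !inE /= => /andP[lnz /andP[sE Qs]] ->.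
  have wE : f (l, s) \notin E.
    apply: contra w0E; rewrite fE => lsw0E.
    have := memvB lsw0E (memvZ l sE); rewrite addrC addKr.
    by move/(memvZ l^-1); rewrite scalerA mulVf // scale1r.
  rewrite wE andbT memvZ ?memvD ?(subvP subE s sE) //=.
  apply: isotropic_decomposable; first exact: isotropicZ.
  by apply: contra wE => /eqP->; rewrite mem0v.
rewrite (card_in_imset (f := f)) ?cardsX ?cardsC1; last first.
  move=> [l s] [l' s'] /setXP[+ +] /setXP[_ +]; rewrite !inE => lnz /andP[sE _] /andP[s'E _].
  by rewrite !fE => /(E1_split_inj (memvZ l sE) (memvZ l' s'E))[<- /(scalerI lnz)->].
by rewrite -card_vspace; congr (_ * _)%N; apply: eq_card => s; rewrite mem_shift_space.
Qed.

Lemma exists_nonisotropic_shift : ~ decomposable_space E1 ->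
  exists2 xi, xi \in E & ~~ isotropic (w0 + xi).
Proof.
move=> ndecE1; apply: NNPP => allQ; apply: ndecE1 => w wE1.
have [l [e [eE ->]]] := E1_split wE1; have [-> | lnz] := eqVneq l 0.
  by rewrite scale0r addr0; apply: decE.
move=> wnz; apply: isotropic_decomposable wnz.
have -> : e + l *: w0 = l *: (w0 + l^-1 *: e).
  by rewrite scalerDr scalerA mulfV // scale1r addrC.
apply/isotropicZ/negbNE/negP => nQ; apply: allQ; exists (l^-1 *: e) => //.
by rewrite memvZ.
Qed.

Lemma shift_space_meet s : s \in shift_space -> s != 0 ->
  [/\ s \in E, decomposable s & (Vw w0 :&: Vw s != 0)%VS].
Proof.
rewrite mem_shift_space inE => /andP[sE Qs] snz; have ds := decE sE snz.
by split=> //; apply: decomposable_planes_meet.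
Qed.

Lemma dim_shift_space_le2 : ~ decomposable_space E1 -> (\dim shift_space <= 2)%N.
Proof.
move=> /exists_nonisotropic_shift[xi xiE nQxi].
have dxi : decomposable xi.
  apply: decE xiE _; apply: contra nQxi => /eqP->.
  by rewrite addr0 decomposable_isotropic.
apply: (planes_meeting_disjoint_planes_dim dec_w0 dxi).
- apply/eqP; apply: contraNT nQxi; exact: planes_meet_isotropic.
- move=> s sS snz; have [sE ds w0s] := shift_space_meet sS snz.
  by split=> //; apply: (planes_meet_in decE) => //; case/andP: dxi.
- move=> s s' sS s'S snz s'nz; have [sE _ _] := shift_space_meet sS snz.
  by have [s'E _ _] := shift_space_meet s'S s'nz; apply: (planes_meet_in decE).
Qed.

Lemma dim_shift_space_ge2 : (Vw w0 <= VE E)%VS -> (2 <= \dim shift_space)%N.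
Proof.
move=> w0VE; have [a [b [w0ab abnz]]] := decomposable_wedge dec_w0.
have [aVE bVE] : a \in VE E /\ b \in VE E.
  by split; apply: (subvP w0VE); rewrite w0ab Vw_wedge // ?memv_span2l ?memv_span2r.
have anz : a != 0 by apply: contra abnz => /eqP->; rewrite wedge0l.
have bnz : b != 0 by apply: contra abnz => /eqP->; rewrite wedge0r.
have [y [ayE aynz]] := VE_partner decE aVE anz.
have [z [bzE bznz]] := VE_partner decE bVE bnz.
have ayS : wedge a y \in shift_set by rewrite inE ayE w0ab -wedgeDr isotropic_wedge.
have bzS : wedge b z \in shift_set.
  rewrite inE bzE /=; have -> : w0 + wedge b z = wedge (a - z) b.
    by apply/matrixP => i j; rewrite w0ab mxE !wedgeE !mxE; ring.
  exact: isotropic_wedge.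
have indep : free [:: wedge a y; wedge b z].
  rewrite free_cons seq1_free bznz andbT span_seq1; apply/vlineP => -[k ayk].
  have kbznz : wedge (k *: b) z != 0 by rewrite wedgeZl -ayk.
  have : a \in <<[:: k *: b; z]>>%VS.
    by rewrite -Vw_wedge // wedgeZl -ayk Vw_wedge // memv_span2l.
  case/span2P=> al [be aE]; apply/negP: w0E; apply/negPn.
  by rewrite w0ab aE wedgeDl !wedgeZl wedgexx !scaler0 add0r wedgeC rpredZ ?rpredN.
suff /dimvS : (<<[:: wedge a y; wedge b z]>> <= shift_space)%VS by rewrite (eqP indep).
by apply/span_subvP => s; rewrite !inE mem_shift_space => /orP[]/eqP->.
Qed.

End ShiftByDecomposable.

Theorem lemma6p3 (F : finFieldType) (m : nat) (E E1 : {vspace 'M[F]_m}) :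
  (4 < m)%N ->
  (forall w, w \in E1 -> alternating w) ->
  (E <= E1)%VS ->
  \dim E1 = (\dim E).+1 ->
  decomposable_space E ->
  ~ decomposable_space E1 ->
  (#|dec_diff E E1| <= #|F| ^ 2 * (#|F| - 1))%N /\
  ((exists w, [/\ w \in E1, w \notin E, decomposable w & (Vw w <= VE E)%VS]) ->
   #|dec_diff E E1| = (#|F| ^ 2 * (#|F| - 1))%N).
Proof.
move=> _ _ subE dimE1 decE ndecE1; rewrite mulnC subn1.
have F_gt0 : (0 < #|F|)%N by apply/card_gt0P; exists 0.
split.
  have [-> | [w0]] := set_0Vmem (dec_diff E E1); first by rewrite cards0.
  rewrite inE => /andP[/andP[w0E1 w0E] dw0].
  rewrite (card_dec_diff subE dimE1 decE dw0 w0E1 w0E) leq_mul2l leq_pexp2l ?orbT //.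
  exact: dim_shift_space_le2 subE dimE1 decE dw0 w0E1 w0E ndecE1.
case=> w0 [w0E1 w0E dw0 w0VE].
rewrite (card_dec_diff subE dimE1 decE dw0 w0E1 w0E); congr (_ * _ ^ _)%N.
apply/eqP; rewrite eqn_leq (dim_shift_space_le2 subE dimE1 decE dw0 w0E1 w0E ndecE1).
exact: dim_shift_space_ge2 decE dw0 w0E w0VE.
Qed.
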